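(* Let $n\ge2$, $\boldsymbol\sigma\in\{+,-\}^n$, $0\le s<t<1$, and let $\mathcal A:\mathbb Z_L^n\to\mathbb C$. Then $$\|\mathcal U_{s,t,\boldsymbol\sigma}\circ\mathcal A\|_{\max}\prec\|\mathcal A\|_{\max}\cdot(\eta_s/\eta_t)^n.$$
   Context: Fix $|E|<2$; $m=\lim_{\varepsilon\downarrow0}m_{sc}(E+i\varepsilon)$ ($m_{sc}$ the semicircle Stieltjes transform), $m(+)=m$, $m(-)=\bar m$, $\eta_t=(1-t)\operatorname{Im}m$. $S^{(B)}$ is the $L\times L$ matrix $S^{(B)}_{ab}=\frac13\mathbf 1(a-b\in\{-1,0,1\}\bmod L)$. For $m_i=m(\sigma_i)$ with the convention $\sigma_{n+1}=\sigma_1$, $(\mathcal U_{s,t,\boldsymbol\sigma}\circ\mathcal A)_{\mathbf a}=\sum_{\mathbf b\in\mathbb Z_L^n}\prod_{i=1}^n\Big(\frac{1-s\,m_im_{i+1}S^{(B)}}{1-t\,m_im_{i+1}S^{(B)}}\Big)_{a_ib_i}\mathcal A_{\mathbf b}$. $\|\mathcal A\|_{\max}=\max_{\mathbf a}|\mathcal A_{\mathbf a}|$. For deterministic quantities, $\xi\prec\zeta$ means $\xi\le N^\epsilon\zeta$ for all $\epsilon>0$ and large $N$, where $L$, $W$ depend on $N$. *)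

From HB Require Import structures.
From mathcomp Require Import all_boot all_order all_algebra.
From mathcomp Require Import all_classical all_reals all_analysis.
From mathcomp Require Import complex.
Set Implicit Arguments. Unset Strict Implicit. Unset Printing Implicit Defensive.
Import Order.TTheory GRing.Theory Num.Theory.
Local Open Scope ring_scope.
Local Open Scope complex_scope.

Section Defs.
Variable R : realType.
Local Notation C := R[i].

Definition cabs (z : C) : R :=
  let: a +i* b := z in Num.sqrt (a ^+ 2 + b ^+ 2).

Definition cim (z : C) : R := let: _ +i* b := z in b.

(* Boundary value m = lim_{eps -> 0+} m_sc(E + i eps) of the Stieltjes
   transform of the semicircle law, for |E| < 2:
   m_sc(z) = (-z + sqrt(z^2 - 4))/2, branch with Im m_sc > 0, giving
   m = (-E + i sqrt(4 - E^2)) / 2. *)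
Definition msc_bd (E : R) : C :=
  (- E / 2) +i* (Num.sqrt (4 - E ^+ 2) / 2).

(* m(+) = m, m(-) = conj m ; sign encoded as bool (true = +) *)
Definition msig (E : R) (sg : bool) : C :=
  if sg then msc_bd E else let: a +i* b := msc_bd E in a +i* (- b).

Definition eta_t (E t : R) : R := (1 - t) * cim (msc_bd E).

Definition SB (L : nat) : 'M[C]_L :=
  \matrix_(a < L, b < L)
    (if [|| ((a + 1) %% L == b)%N, (a == b :> nat) | ((b + 1) %% L == a)%N]
     then 3%:R^-1 else 0).

Definition Ufactor (L : nat) (s t : R) (x : C) : 'M[C]_L :=
  (1%:M - (s%:C * x) *: SB L) *m invmx (1%:M - (t%:C * x) *: SB L).

(* (U_{s,t,sigma} o A)_a, indices a in Z_L^n encoded as {ffun 'I_n -> 'I_L},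
   sigma_{n+1} = sigma_1 via the cyclic successor ordS *)
Definition Uop (E : R) (L n : nat) (s t : R) (sigma : 'I_n -> bool)
    (A : {ffun 'I_n -> 'I_L} -> C) (a : {ffun 'I_n -> 'I_L}) : C :=
  \sum_(b : {ffun 'I_n -> 'I_L})
     (\prod_(i < n)
        Ufactor L s t (msig E (sigma i) * msig E (sigma (ordS i))) (a i) (b i))
     * A b.

Definition maxnorm (L n : nat) (A : {ffun 'I_n -> 'I_L} -> C) : R :=
  \big[Num.max/0]_(a : {ffun 'I_n -> 'I_L}) cabs (A a).

End Defs.

From HB Require Import structures.
From mathcomp Require Import all_boot all_order all_algebra.
From mathcomp Require Import all_classical all_reals all_analysis.
From mathcomp Require Import complex.
From mathcomp Require Import ring lra.
Set Implicit Arguments. Unset Strict Implicit. Unset Printing Implicit Defensive.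
Import Order.TTheory GRing.Theory Num.Theory.
Local Open Scope ring_scope.

(* The max-row-sum norm |M| = max_a sum_b |M_ab| is the operator norm on
   l^oo, and a tensor product of operators M_1, ..., M_n acting on
   functions on Z_L^n has l^oo operator norm at most prod_i |M_i|.  Since
   |S^(B)| <= 1 and |m_i m_(i+1)| = 1, the matrix 1 - t x S is invertible
   (a kernel vector v satisfies |v| <= t |v|), and
     (1 - t x S)^-1 = 1 + t x S (1 - t x S)^-1
   gives |(1 - t x S)^-1| <= 1/(1 - t).  Hence
     (1 - s x S)(1 - t x S)^-1 = 1 + (t - s) x S (1 - t x S)^-1
   has norm at most 1 + (t - s)/(1 - t) = (1 - s)/(1 - t) = eta_s/eta_t.
   The estimate thus holds with constant 1 and for every n. *)

Section ComplexModulus.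
Variable R : realType.
Local Notation C := R[i].
Implicit Types (x y z : C) (r : R).

Lemma cabsE z : `|z| = (cabs z)%:C%C.
Proof. by case: z. Qed.

Lemma cabsR r : cabs r%:C%C = `|r|.
Proof. by rewrite /cabs /= expr0n /= addr0 sqrtr_sqr. Qed.

Lemma cabs0 : cabs (0 : C) = 0.
Proof. by rewrite -(rmorph0 (real_complex R)) cabsR normr0. Qed.

Lemma cabs_ge0 z : 0 <= cabs z.
Proof. by rewrite -(@lecR R) rmorph0 -cabsE. Qed.

Lemma cabs0_eq0 z : cabs z = 0 -> z = 0.
Proof. by move=> z0; apply/normr0_eq0; rewrite cabsE z0. Qed.

Lemma ler_cabsD x y : cabs (x + y) <= cabs x + cabs y.
Proof. by rewrite -(@lecR R) rmorphD -!cabsE ler_normD. Qed.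

Lemma cabsM x y : cabs (x * y) = cabs x * cabs y.
Proof. by apply: (@complexI R); rewrite rmorphM -!cabsE normrM. Qed.

Lemma ler_cabs_sum (I : finType) (F : I -> C) :
  cabs (\sum_i F i) <= \sum_i cabs (F i).
Proof.
rewrite -(@lecR R) rmorph_sum -cabsE.
apply: le_trans (ler_norm_sum _ _ _) _.
by under eq_bigr do rewrite cabsE.
Qed.

Lemma cabs_prod (I : finType) (F : I -> C) :
  cabs (\prod_i F i) = \prod_i cabs (F i).
Proof.
apply: (@complexI R); rewrite rmorph_prod -cabsE normr_prod.
by apply: eq_bigr => i _; rewrite cabsE.
Qed.

End ComplexModulus.

Section MaxRowSumNorm.
Variable R : realType.
Local Notation C := R[i].

Definition mxnorm_inf m n (M : 'M[C]_(m, n)) : R :=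
  \big[Num.max/0]_i \sum_j cabs (M i j).

Lemma mxnorm_inf_ge0 m n (M : 'M[C]_(m, n)) : 0 <= mxnorm_inf M.
Proof. exact: bigmax_ge_id. Qed.

Lemma rowsum_le_mxnorm_inf m n (M : 'M[C]_(m, n)) i :
  \sum_j cabs (M i j) <= mxnorm_inf M.
Proof. exact: le_bigmax. Qed.

Lemma mxnorm_inf_le m n (M : 'M[C]_(m, n)) c :
  0 <= c -> (forall i, \sum_j cabs (M i j) <= c) -> mxnorm_inf M <= c.
Proof. by move=> c_ge0 rows_le; apply: bigmax_le. Qed.

Lemma mxnorm_inf0_eq0 m n (M : 'M[C]_(m, n)) : mxnorm_inf M = 0 -> M = 0.
Proof.
move=> M0; apply/matrixP => i j; rewrite mxE; apply: cabs0_eq0.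
apply/eqP; rewrite eq_le cabs_ge0 andbT -M0.
apply: le_trans (rowsum_le_mxnorm_inf M i).
by rewrite (bigD1 j) //= lerDl sumr_ge0 // => k _; apply: cabs_ge0.
Qed.

Lemma mxnorm_inf1 n : mxnorm_inf (1%:M : 'M[C]_n) <= 1.
Proof.
apply: mxnorm_inf_le => // i; rewrite (bigD1 i) //= big1 => [|j ji].
  by rewrite addr0 mxE eqxx -(rmorph1 (real_complex R)) cabsR normr1.
by rewrite mxE eq_sym (negbTE ji) cabs0.
Qed.

Lemma ler_mxnorm_infD m n (M N : 'M[C]_(m, n)) :
  mxnorm_inf (M + N) <= mxnorm_inf M + mxnorm_inf N.
Proof.
apply: mxnorm_inf_le => [|i]; first by rewrite addr_ge0 ?mxnorm_inf_ge0.
apply: le_trans (lerD (rowsum_le_mxnorm_inf M i) (rowsum_le_mxnorm_inf N i)).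
by rewrite -big_split ler_sum // => j _; rewrite mxE ler_cabsD.
Qed.

Lemma ler_mxnorm_infZ m n a (M : 'M[C]_(m, n)) :
  mxnorm_inf (a *: M) <= cabs a * mxnorm_inf M.
Proof.
apply: mxnorm_inf_le => [|i]; first by rewrite mulr_ge0 ?cabs_ge0 ?mxnorm_inf_ge0.
under eq_bigr do rewrite mxE cabsM.
by rewrite -mulr_sumr ler_wpM2l ?cabs_ge0 ?rowsum_le_mxnorm_inf.
Qed.

Lemma ler_mxnorm_infM m n p (M : 'M[C]_(m, n)) (N : 'M[C]_(n, p)) :
  mxnorm_inf (M *m N) <= mxnorm_inf M * mxnorm_inf N.
Proof.
apply: mxnorm_inf_le => [|i]; first by rewrite mulr_ge0 ?mxnorm_inf_ge0.
apply: (@le_trans _ _ (\sum_k cabs (M i k) * mxnorm_inf N)); last first.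
  by rewrite -mulr_suml ler_wpM2r ?mxnorm_inf_ge0 ?rowsum_le_mxnorm_inf.
apply: (@le_trans _ _ (\sum_j \sum_k cabs (M i k * N k j))).
  by apply: ler_sum => j _; rewrite mxE ler_cabs_sum.
rewrite exchange_big /=; apply: ler_sum => k _.
under eq_bigr do rewrite cabsM.
by rewrite -mulr_sumr ler_wpM2l ?cabs_ge0 ?rowsum_le_mxnorm_inf.
Qed.

End MaxRowSumNorm.

Section Resolvent.
Variables (R : realType) (L : nat) (P : 'M[R[i]]_L) (c : R[i]).
Hypotheses (P_le1 : mxnorm_inf P <= 1) (c_lt1 : cabs c < 1).

Local Notation M := (1%:M - c *: P).

Lemma resolvent_inj (v : 'cV[R[i]]_L) : M *m v = 0 -> v = 0.
Proof.
rewrite mulmxBl mul1mx -scalemxAl => /eqP; rewrite subr_eq0 => /eqP v_fix.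
have v_small : mxnorm_inf v <= cabs c * mxnorm_inf v.
  rewrite {1}v_fix; apply: le_trans (ler_mxnorm_infZ _ _) _.
  rewrite ler_wpM2l ?cabs_ge0 //; apply: le_trans (ler_mxnorm_infM _ _) _.
  by rewrite ler_piMl ?mxnorm_inf_ge0.
apply: mxnorm_inf0_eq0; apply/eqP; rewrite eq_le mxnorm_inf_ge0 andbT.
move: v_small (mxnorm_inf_ge0 v) c_lt1; set x := mxnorm_inf v; set k := cabs c.
nra.
Qed.

Lemma resolvent_unit : M \in unitmx.
Proof.
rewrite -unitmx_tr -row_free_unit; apply: inj_row_free => v vM0.
have /resolvent_inj : M *m v^T = 0 by rewrite -[LHS]trmxK trmx_mul trmxK vM0 trmx0.
by move/(congr1 trmx); rewrite trmxK trmx0.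
Qed.

Lemma invmx_resolvent : invmx M = 1%:M + c *: (P *m invmx M).
Proof.
have := mulmxV resolvent_unit.
by rewrite mulmxBl mul1mx -scalemxAl => /eqP; rewrite subr_eq addrC => /eqP.
Qed.

Lemma mxnorm_inf_invmx_resolvent : mxnorm_inf (invmx M) <= (1 - cabs c)^-1.
Proof.
have r_le : mxnorm_inf (invmx M) <= 1 + cabs c * mxnorm_inf (invmx M).
  rewrite {1}invmx_resolvent; apply: le_trans (ler_mxnorm_infD _ _) _.
  apply: lerD; first exact: mxnorm_inf1.
  apply: le_trans (ler_mxnorm_infZ _ _) _; rewrite ler_wpM2l ?cabs_ge0 //.
  apply: le_trans (ler_mxnorm_infM _ _) _.
  by rewrite ler_piMl ?mxnorm_inf_ge0.
by rewrite -div1r ler_pdivlMr ?subr_gt0 //; nra.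
Qed.

Lemma mxnorm_inf_mul_invmx_resolvent a :
  mxnorm_inf ((1%:M - a *: P) *m invmx M) <= 1 + cabs (c - a) / (1 - cabs c).
Proof.
have -> : (1%:M - a *: P) *m invmx M = 1%:M + (c - a) *: (P *m invmx M).
  rewrite mulmxBl mul1mx -scalemxAl {1}invmx_resolvent scalerBl.
  by rewrite addrA -[1%:M + _ - _]addrA.
apply: le_trans (ler_mxnorm_infD _ _) _; apply: lerD; first exact: mxnorm_inf1.
apply: le_trans (ler_mxnorm_infZ _ _) _; rewrite ler_wpM2l ?cabs_ge0 //.
apply: le_trans (ler_mxnorm_infM _ _) _.
apply: le_trans (ler_wpM2r (mxnorm_inf_ge0 _) P_le1) _.
by rewrite mul1r mxnorm_inf_invmx_resolvent.
Qed.

End Resolvent.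

Section Factors.
Variable R : realType.
Local Notation C := R[i].

Lemma cabs_inv3 : cabs (3%:R^-1 : C) = 3^-1.
Proof.
have -> : (3%:R : C) = (3%:R : R)%:C%C by rewrite rmorphMn.
by rewrite -fmorphV cabsR ger0_norm // invr_ge0.
Qed.

Lemma SB_neighbours L (a b : 'I_L) :
  [|| ((a + 1) %% L == b)%N, (a == b :> nat) | ((b + 1) %% L == a)%N] ->
  b \in [:: ordS a; a; ord_pred a].
Proof.
rewrite !inE => /or3P[] /eqP ab; apply/or3P.
- by apply: Or31; apply/eqP/val_inj; rewrite /= -ab addn1.
- by apply: Or32; apply/eqP/val_inj.
- apply: Or33; rewrite -(ordSK b); apply/eqP; congr ord_pred.
  by apply/val_inj; rewrite /= -ab addn1.
Qed.

Lemma mxnorm_inf_SB L : mxnorm_inf (SB R L) <= 1.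
Proof.
apply: mxnorm_inf_le => // a.
under eq_bigr do rewrite mxE (fun_if (@cabs R)) cabs0 cabs_inv3.
rewrite -big_mkcond /= sumr_const.
set k := #|_|; have k_le3 : (k <= 3)%N.
  apply: leq_trans (card_size [:: ordS a; a; ord_pred a]).
  apply: subset_leq_card; apply/fintype.subsetP => b.
  by rewrite inE; apply: SB_neighbours.
by rewrite -[_ *+ k]mulr_natr mulrC ler_pdivrMr // mul1r ler_nat.
Qed.

Lemma mxnorm_inf_Ufactor L (s t : R) (x : C) :
  cabs x = 1 -> 0 <= t -> s <= t -> t < 1 ->
  mxnorm_inf (Ufactor L s t x) <= (1 - s) / (1 - t).
Proof.
move=> x1 t_ge0 st t_lt1.
have tx : cabs (t%:C%C * x) = t by rewrite cabsM x1 mulr1 cabsR ger0_norm.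
have txsx : cabs (t%:C%C * x - s%:C%C * x) = t - s.
  by rewrite -mulrBl -rmorphB cabsM x1 mulr1 cabsR ger0_norm // subr_ge0.
apply: le_trans (mxnorm_inf_mul_invmx_resolvent (mxnorm_inf_SB L) _ _) _.
  by rewrite tx.
rewrite txsx tx (_ : 1 + (t - s) / (1 - t) = (1 - s) / (1 - t)) //.
by field; rewrite subr_eq0 gt_eqF.
Qed.

End Factors.

Section Tensor.
Variables (R : realType) (n L : nat).
Local Notation C := R[i].
Local Notation ZLn := {ffun 'I_n -> 'I_L}.
Implicit Types (A : ZLn -> C) (a : ZLn).

Lemma maxnorm_ge0 A : 0 <= maxnorm A.
Proof. exact: bigmax_ge_id. Qed.

Lemma cabs_le_maxnorm A a : cabs (A a) <= maxnorm A.
Proof. exact: (le_bigmax _ (fun b => cabs (A b))). Qed.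

Lemma cabs_tensor_apply (M : 'I_n -> 'M[C]_L) A a :
  cabs (\sum_(b : ZLn) (\prod_i M i (a i) (b i)) * A b)
    <= (\prod_i mxnorm_inf (M i)) * maxnorm A.
Proof.
apply: le_trans (ler_cabs_sum _) _.
apply: (@le_trans _ _ (\sum_(b : ZLn) (\prod_i cabs (M i (a i) (b i))) * maxnorm A)).
  apply: ler_sum => b _; rewrite cabsM cabs_prod ler_wpM2l ?cabs_le_maxnorm //.
  by apply: prodr_ge0 => i _; apply: cabs_ge0.
rewrite -mulr_suml ler_wpM2r ?maxnorm_ge0 //.
rewrite -(bigA_distr_bigA (fun i j => cabs (M i (a i) j))) /=.
apply: ler_prod => i _; rewrite sumr_ge0 => [|j _]; last exact: cabs_ge0.
exact: rowsum_le_mxnorm_inf.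
Qed.

End Tensor.

Section Semicircle.
Variables (R : realType) (E : R).
Hypothesis E_lt2 : `|E| < 2.

Lemma semicircle_disc_gt0 : 0 < 4 - E ^+ 2.
Proof.
move: E_lt2 (normr_ge0 E); rewrite -real_normK ?num_real //; nra.
Qed.

Lemma cabs_msig sg : cabs (msig E sg) = 1.
Proof.
have msc_norm : (- E / 2) ^+ 2 + (Num.sqrt (4 - E ^+ 2) / 2) ^+ 2 = 1.
  rewrite !expr_div_n sqr_sqrtr ?ltW ?semicircle_disc_gt0 // sqrrN.
  by field.
by case: sg; rewrite /msig /msc_bd /cabs /= ?sqrrN msc_norm sqrtr1.
Qed.

Lemma cim_msc_bd_gt0 : 0 < cim (msc_bd E).
Proof. by rewrite /cim /msc_bd /= divr_gt0 // sqrtr_gt0 semicircle_disc_gt0. Qed.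

Lemma eta_t_ratio s t : t != 1 -> eta_t E s / eta_t E t = (1 - s) / (1 - t).
Proof.
move=> t_neq1; rewrite /eta_t.
by field; rewrite subr_eq0 eq_sym t_neq1 gt_eqF ?cim_msc_bd_gt0.
Qed.

End Semicircle.

Theorem lemma7p1 (R : realType) (E : R) (n : nat) (L : nat -> nat) :
  `|E| < 2 -> (2 <= n)%N ->
  forall eps : R, 0 < eps ->
  exists N0 : nat, forall N : nat, (N0 <= N)%N ->
  forall (sigma : 'I_n -> bool) (s t : R), 0 <= s -> s < t -> t < 1 ->
  forall A : {ffun 'I_n -> 'I_(L N)} -> R[i],
    maxnorm (Uop E s t sigma A)
      <= (N%:R `^ eps) * maxnorm A * (eta_t E s / eta_t E t) ^+ n.
Proof.
move=> E_lt2 _ eps eps_gt0; exists 1%N => N N_ge1 sigma s t s_ge0 st t_lt1 A.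
rewrite eta_t_ratio ?lt_eqF //; set K := (1 - s) / (1 - t).
have K_ge0 : 0 <= K by rewrite divr_ge0 // subr_ge0 ltW // (lt_trans st).
have Neps_ge1 : 1 <= N%:R `^ eps.
  by rewrite -{1}(powRr0 N%:R); apply: ler_powR; rewrite ?ler1n // ltW.
have U_le i : 0 <= mxnorm_inf (Ufactor (L N) s t
    (msig E (sigma i) * msig E (sigma (ordS i)))) <= K.
  rewrite mxnorm_inf_ge0 mxnorm_inf_Ufactor ?cabsM ?cabs_msig ?mulr1 //.
  + exact: le_trans s_ge0 (ltW st).
  + exact: ltW.
have prodU_le : \prod_i mxnorm_inf (Ufactor (L N) s t
    (msig E (sigma i) * msig E (sigma (ordS i)))) <= K ^+ n.
  by rewrite -[n in K ^+ n]card_ord -prodr_const ler_prod.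
apply: bigmax_le => [|a _]; first by rewrite !mulr_ge0 ?powR_ge0 ?maxnorm_ge0 ?exprn_ge0.
apply: le_trans (cabs_tensor_apply _ _ a) _.
apply: le_trans (ler_wpM2r (maxnorm_ge0 A) prodU_le) _.
by rewrite mulrC -mulrA ler_peMl // mulr_ge0 ?maxnorm_ge0 ?exprn_ge0.
Qed.
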